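(* In the setting described in the context, for every $K\in\mathbb{N}$, $\mathcal{L}^K_\phi\ge\mathcal{L}^{K+1}_\phi$, where for $k\in\mathbb{N}$ $$\mathcal{L}^k_\phi=\mathbb{E}_{q^k_\phi(\tau)}\left[\sum_{t=0}^{k-1}\gamma^t\Big((1-\gamma)\log r(s_t,a_t)+\log e_\phi(z_{t+1}\mid s_{t+1})-\log m_\phi(z_{t+1}\mid z_t,a_t)\Big)+\gamma^k\log Q(s_k,a_k)\right].$$
   Context: An MDP has states $s$, actions $a$, initial state distribution $p_0(s)$, transition density $p(s_{t+1}\mid s_t,a_t)$, a nonnegative reward function $r(s,a)\ge 0$, and discount $\gamma\in[0,1)$ (convention $\log 0=-\infty$). An encoder $e_\phi(z\mid s)$ (conditional density over representations), a latent-space model $m_\phi(z_{t+1}\mid z_t,a_t)$ (conditional density), and a latent policy $\pi_\phi(a\mid z)$ are given. Trajectories are $\tau=(s_0,a_0,z_0,s_1,a_1,z_1,\dots)$, with true distribution $p_\phi(\tau)=p_0(s_0)\prod_{t\ge0}p(s_{t+1}\mid s_t,a_t)\pi_\phi(a_t\mid z_t)e_\phi(z_t\mid s_t)$. The Q-function is $Q(s,a)=\mathbb{E}_{p_\phi}[(1-\gamma)\sum_{t\ge0}\gamma^t r(s_t,a_t)\mid s_0=s,a_0=a]$. For $k\in\mathbb{N}$, $q^k_\phi(\tau)=p_0(s_0)e_\phi(z_0\mid s_0)\pi_\phi(a_0\mid z_0)\prod_{t=1}^k p(s_t\mid s_{t-1},a_{t-1})m_\phi(z_t\mid z_{t-1},a_{t-1})\pi_\phi(a_t\mid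 z_t)$. *)

From HB Require Import structures.
From mathcomp Require Import all_boot all_order all_algebra.
From mathcomp Require Import all_classical all_reals all_analysis.
Set Implicit Arguments. Unset Strict Implicit. Unset Printing Implicit Defensive.
Import Order.TTheory GRing.Theory Num.Theory.
Local Open Scope classical_set_scope.
Local Open Scope ring_scope.

Definition elogR {R : realType} (x : R) : \bar R :=
  if 0 < x then (ln x)%:E else -oo%E.
Definition elog {R : realType} (x : \bar R) : \bar R :=
  match x with
  | EFin y => elogR y
  | +oo%E => +oo%E
  | -oo%E => -oo%E
  end.

Section MDP.
Context (d1 d2 d3 : measure_display) (S : measurableType d1)
  (A : measurableType d2) (Z : measurableType d3) (R : realType).
(* reference measures w.r.t. which all densities are taken *)
Context (muS : set S -> \bar R) (muZ : set Z -> \bar R) (muA : set A -> \bar R).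
Context (p : S -> A -> S -> R)     (* p s a s' = p(s' | s, a) *)
        (pi : Z -> A -> R).        (* pi z a  = pi_phi(a | z) *)

(* A partial trajectory is stored as a history (most recent step first) of
   triples (s_t, z_t, a_t).  [zd s z a s' z'] is the density of z_{t+1} = z'
   given (s_t,z_t,a_t) = (s,z,a) and s_{t+1} = s'. *)
Definition step_int (zd : S -> Z -> A -> S -> Z -> R)
  (F : S * Z * A -> \bar R) (x : S * Z * A) : \bar R :=
  let: (s, z, a) := x in
  (\int[muS]_s' ((p s a s')%:E *
     \int[muZ]_z' ((zd s z a s' z')%:E *
        \int[muA]_a' ((pi z' a')%:E * F (s', z', a')))))%E.

(* [ext zd n F h] : conditional expectation of F(history) after n more
   steps of the process, starting from the history h. *)
Fixpoint ext (zd : S -> Z -> A -> S -> Z -> R) (n : nat)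
  (F : seq (S * Z * A) -> \bar R) (h : seq (S * Z * A)) : \bar R :=
  match n with
  | 0 => F h
  | n'.+1 => step_int zd (fun x => ext zd n' F (x :: h)) (head point h)
  end.

Definition traj (h : seq (S * Z * A)) (t : nat) : S * Z * A := nth point (rev h) t.
Definition st h t := (traj h t).1.1.
Definition zt h t := (traj h t).1.2.
Definition at_ h t := (traj h t).2.
End MDP.

Section Objective.
Context (d1 d2 d3 : measure_display) (S : measurableType d1)
  (A : measurableType d2) (Z : measurableType d3) (R : realType).
Context (muS : set S -> \bar R) (muZ : set Z -> \bar R) (muA : set A -> \bar R).
Context (p0 : S -> R) (p : S -> A -> S -> R) (e : S -> Z -> R)
  (m : Z -> A -> Z -> R) (pi : Z -> A -> R) (r : S -> A -> R) (gamma : R).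

(* true process p_phi: z_{t+1} ~ e_phi(. | s_{t+1}) *)
Definition zd_true : S -> Z -> A -> S -> Z -> R := fun _ _ _ s' z' => e s' z'.
(* model process q_phi: z_{t+1} ~ m_phi(. | z_t, a_t) *)
Definition zd_model : S -> Z -> A -> S -> Z -> R := fun _ z a _ z' => m z a z'.

Definition Qtrunc (N : nat) (s : S) (a : A) : \bar R :=
  ext muS muZ muA p pi zd_true N
    (fun h => ((1 - gamma) * \sum_(t < N.+1) gamma ^+ t * r (st h t) (at_ h t))%:E)
    [:: (s, point, a)].

(* Q(s,a) = E_{p_phi}[(1-gamma) sum_{t>=0} gamma^t r(s_t,a_t) | s_0=s, a_0=a],
   obtained (monotone convergence, r >= 0) as the limit of the truncations *)
Definition Qfun (s : S) (a : A) : \bar R := lim (Qtrunc N s a @[N --> \oo]).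

Definition Lintegrand (k : nat) (h : seq (S * Z * A)) : \bar R :=
  ((\sum_(t < k) (gamma ^+ t)%:E *
      ((1 - gamma)%:E * elogR (r (st h t) (at_ h t))
       + elogR (e (st h t.+1) (zt h t.+1))
       - elogR (m (zt h t) (at_ h t) (zt h t.+1))))
   + (gamma ^+ k)%:E * elog (Qfun (st h k) (at_ h k)))%E.

(* expectation under q^k_phi of a function of the trajectory up to time k *)
Definition Eq (k : nat) (F : seq (S * Z * A) -> \bar R) : \bar R :=
  (\int[muS]_s0 ((p0 s0)%:E *
    \int[muZ]_z0 ((e s0 z0)%:E *
      \int[muA]_a0 ((pi z0 a0)%:E *
         ext muS muZ muA p pi zd_model k F [:: (s0, z0, a0)]))))%E.

Definition Lobj (k : nat) : \bar R := Eq k (Lintegrand k).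

Definition Lintegrable (k : nat) : Prop :=
  (Eq k (fun h => `|Lintegrand k h|) < +oo)%E.
End Objective.

(* Conditioning on the trajectory up to time K, L^{K+1} and L^K differ only in
   their last step, so it suffices to show that for every (s, z, a)
     E_{s' ~ p, z' ~ m, a' ~ pi} [(1 - gamma) log r(s, a) + log e(z' | s')
                                  - log m(z' | z, a) + gamma log Q(s', a')]
       <= log Q(s, a).
   With q = Q(s, a), the tangent bound ln x <= x - 1 at r/q, e/m and
   e Q(s', a') / (m q) bounds the integrand by a constant plus
   (e/m) ((1 - gamma) + gamma Q(s', a') / q).  Changing measure from m to e
   turns the expectation of the latter into (1 - gamma) + (gamma / q) E Q(s', a'),
   the expectation being now under the true process, and the Bellman inequality
   (1 - gamma) r(s, a) + gamma E Q(s', a') <= Q(s, a), obtained from the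
   truncations of Q by monotone convergence, makes the bound collapse to log q. *)

From HB Require Import structures.
From mathcomp Require Import all_boot all_order all_algebra.
From mathcomp Require Import all_classical all_reals all_analysis.
From mathcomp Require Import measurable_realfun ring lra.
Import Order.TTheory GRing.Theory Num.Theory.
Local Open Scope classical_set_scope.
Local Open Scope ring_scope.

Set Implicit Arguments.
Unset Strict Implicit.

Section density_integral.
Local Open Scope ereal_scope.
Context d (X : measurableType d) (R : realType) (mu : {measure set X -> \bar R}).

(* No integrability is needed: the integral is the difference of the integrals
   of the positive and negative parts, which are monotone in opposite directions. *)
Lemma le_integral_pointwise (f g : X -> \bar R) : (forall x, f x <= g x) ->
  \int[mu]_x f x <= \int[mu]_x g x.
Proof.
move=> fg; rewrite /integral; apply: leeB; apply: ereal_sup_le.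
- move=> _ [h hle <-]; exists h => // x; apply: le_trans (hle x) _.
  rewrite !patch_setT; apply: (@funepos_le _ _ setT) => [y _|]; first exact: fg.
  by rewrite in_setT.
- move=> _ [h hle <-]; exists h => // x; apply: le_trans (hle x) _.
  rewrite !patch_setT; apply: (@funeneg_le _ _ setT) => [y _|]; first exact: fg.
  by rewrite in_setT.
Qed.

Variables (rho : X -> R) (mrho : measurable_fun setT rho)
  (rho_ge0 : forall x, (0 <= rho x)%R) (rho1 : \int[mu]_x (rho x)%:E = 1).

Let measurable_rhoE : measurable_fun setT (fun x => (rho x)%:E).
Proof. exact/measurable_EFinP. Qed.

Let measurable_densityM (F : X -> \bar R) : measurable_fun setT F ->
  measurable_fun setT (fun x => (rho x)%:E * F x).
Proof. by move=> mF; exact: emeasurable_funM. Qed.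

Lemma le_integral_density (f g : X -> \bar R) : (forall x, f x <= g x) ->
  \int[mu]_x ((rho x)%:E * f x) <= \int[mu]_x ((rho x)%:E * g x).
Proof.
by move=> fg; apply: le_integral_pointwise => x; rewrite lee_wpmul2l ?lee_fin.
Qed.

Lemma integral_density_cst (c : \bar R) : \int[mu]_x ((rho x)%:E * c) = c.
Proof.
have rhoE_ge0 x : setT x -> 0 <= (rho x)%:E by rewrite lee_fin.
have [c0|c0] := leP 0 c; first by rewrite ge0_integralZr ?rho1 ?mul1e.
have -> : (fun x => (rho x)%:E * c) = (fun x => - ((rho x)%:E * - c)).
  by apply/funext => x; rewrite muleN oppeK.
rewrite integral_ge0N; last by move=> x _; rewrite mule_ge0 ?lee_fin// oppe_ge0 ltW.
by rewrite ge0_integralZr ?rho1 ?mul1e ?oppeK// oppe_ge0 ltW.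
Qed.

Lemma integral_cst_densityD_le (C : R) (G : X -> \bar R) :
  measurable_fun setT G -> (forall x, 0 <= G x) ->
  \int[mu]_x ((rho x)%:E * C%:E + G x) <= C%:E + \int[mu]_x G x.
Proof.
move=> mG G0; have mC := measurable_densityM (measurable_cst C%:E).
have [C0|C0] := leP 0%R C.
  by rewrite ge0_integralD ?integral_density_cst// => x _; rewrite mule_ge0 ?lee_fin.
have [->|Gfin] := eqVneq (\int[mu]_x G x) +oo; first by rewrite addey ?leey.
have iC : mu.-integrable setT (fun x => (rho x)%:E * C%:E).
  apply/integrableP; split => //.
  under eq_integral do rewrite abseM gee0_abs ?lee_fin//.
  by rewrite integral_density_cst ltey.
have iG : mu.-integrable setT G.
  apply/integrableP; split => //.
  by under eq_integral do rewrite gee0_abs//; rewrite ltey.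
by rewrite integralD// integral_density_cst.
Qed.

Lemma integral_density_cstD_le (C : R) (F : X -> \bar R) :
  measurable_fun setT F -> (forall x, 0 <= F x) ->
  \int[mu]_x ((rho x)%:E * (C%:E + F x)) <= C%:E + \int[mu]_x ((rho x)%:E * F x).
Proof.
move=> mF F0; under eq_integral do rewrite muleDr//.
apply: integral_cst_densityD_le; first exact: measurable_densityM.
by move=> x; rewrite mule_ge0 ?lee_fin.
Qed.

Lemma integral_density_affine (a b : R) (F : X -> \bar R) :
  measurable_fun setT F -> (forall x, 0 <= F x) -> (0 <= a)%R -> (0 <= b)%R ->
  \int[mu]_x ((rho x)%:E * (a%:E + b%:E * F x)) =
  a%:E + b%:E * \int[mu]_x ((rho x)%:E * F x).
Proof.
move=> mF F0 a0 b0; under eq_integral do rewrite muleDr// muleCA.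
rewrite ge0_integralD//.
- by rewrite integral_density_cst ge0_integralZl// => [|x _]; [exact: measurable_densityM|
    rewrite mule_ge0 ?lee_fin].
- by move=> x _; rewrite mule_ge0 ?lee_fin.
- exact: measurable_densityM (measurable_cst _).
- by move=> x _; rewrite !mule_ge0 ?lee_fin.
- by apply: measurable_funeM; exact: measurable_densityM.
Qed.

Lemma integral_density_limn (F : nat -> X -> \bar R) :
  (forall n, measurable_fun setT (F n)) -> (forall n x, 0 <= F n x) ->
  (forall x, {homo F^~ x : n k / (n <= k)%N >-> n <= k}) ->
  \int[mu]_x ((rho x)%:E * limn (F^~ x)) =
  limn (fun n => \int[mu]_x ((rho x)%:E * F n x)).
Proof.
move=> mF F0 ndF.
rewrite -(monotone_convergence mu measurableT (g' := fun n x => (rho x)%:E * F n x)).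
- apply: eq_integral => x _; rewrite limeMl//.
  exact: ereal_nondecreasing_is_cvgn.
- by move=> n; exact: measurable_densityM.
- by move=> n x _; rewrite mule_ge0 ?lee_fin.
- by move=> x _ n k nk; rewrite lee_wpmul2l ?lee_fin ?ndF.
Qed.

End density_integral.

Lemma ln_le_subr1 (R : realType) (x : R) : 0 < x -> ln x <= x - 1.
Proof. by move=> x0; have := @le_ln1Dx R (x - 1); rewrite addrCA subrr addr0; apply; lra. Qed.

(* The tangent bound at r/q, e/m and e y/(m q), weighted by 1-g, 1-g and g. *)
Lemma ln_elbo_le (R : realType) (g r q e m y : R) :
  0 <= g -> g < 1 -> 0 < r -> 0 < q -> 0 < e -> 0 < m -> 0 < y ->
  (1 - g) * ln r + ln e - ln m + g * ln y <=
  ln q - 1 + (1 - g) * (r / q - 1) + e / m * ((1 - g) + g * y / q).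
Proof.
move=> g0 g1 r0 q0 e0 m0 y0.
have q'0 : 0 < q^-1 by rewrite invr_gt0.
have m'0 : 0 < m^-1 by rewrite invr_gt0.
have rq := ln_le_subr1 (mulr_gt0 r0 q'0).
have em := ln_le_subr1 (mulr_gt0 e0 m'0).
have emyq := ln_le_subr1 (mulr_gt0 (mulr_gt0 (mulr_gt0 e0 m'0) y0) q'0).
rewrite lnM ?posrE// lnV ?posrE// in rq.
rewrite lnM ?posrE// lnV ?posrE// in em.
rewrite !lnM ?posrE ?mulr_gt0// !lnV ?posrE// in emyq.
have g'0 : 0 <= 1 - g by rewrite subr_ge0 ltW.
have := ler_wpM2l g'0 rq; have := ler_wpM2l g'0 em; have := ler_wpM2l g0 emyq.
have qq : q * q^-1 = 1 by rewrite mulfV ?gt_eqF.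
rewrite ?mulrA; nra.
Qed.

Lemma elogR_gt0 (R : realType) (x : R) : 0 < x -> elogR x = (ln x)%:E.
Proof. by rewrite /elogR => ->. Qed.

Lemma elogR0 (R : realType) : elogR (0 : R) = -oo%E.
Proof. by rewrite /elogR ltxx. Qed.

Lemma elbo_integrand_le (R : realType) (c G g r q e m : R) (y : \bar R) :
  0 < G -> 0 <= g -> g < 1 -> 0 < r -> 0 < q -> 0 <= e -> 0 < m -> (0 <= y)%E ->
  (c%:E + G%:E * ((1 - g)%:E * elogR r + elogR e - elogR m) + (G * g)%:E * elog y <=
   (c + G * (ln q - 1 + (1 - g) * (r / q - 1)))%:E +
   (e / m)%:E * ((G * (1 - g))%:E + (G * g / q)%:E * y))%E.
Proof.
move=> G0 g0 g1 r0 q0 e0 m0 y0; rewrite (elogR_gt0 r0) (elogR_gt0 m0).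
have [->|e_neq0] := eqVneq e 0.
  by rewrite elogR0 addeNy addNye gt0_muleNy ?lte_fin// addeNy addNye leNye.
have {e_neq0}{}e0 : 0 < e by rewrite lt_def e_neq0.
rewrite (elogR_gt0 e0).
have [g00|g_neq0] := eqVneq g 0.
  rewrite g00 !mulr0 !mul0r !mul0e !adde0.
  have := ln_elbo_le (lexx 0) ltr01 r0 q0 e0 m0 ltr01.
  rewrite ln1 !mulr0 !mul0r !addr0 => /(ler_wpM2l (ltW G0)) H.
  have {}H : c + G * ((1 - 0) * ln r + ln e - ln m) <=
    c + G * (ln q - 1 + (1 - 0) * (r / q - 1)) + e / m * (G * (1 - 0)) by lra.
  by rewrite -lee_fin in H.
have {g_neq0}{}g0 : 0 < g by rewrite lt_def g_neq0.
case: y y0 => [y| _|//]; last first.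
  have -> : ((e / m)%:E * ((G * (1 - g))%:E + (G * g / q)%:E * +oo) = +oo)%E.
    by rewrite gt0_muley ?lte_fin ?divr_gt0 ?mulr_gt0// addey// gt0_muley ?lte_fin ?divr_gt0.
  by rewrite addey ?leey.
rewrite lee_fin => y0.
have [->|y_neq0] := eqVneq y 0.
  by rewrite /= elogR0 gt0_muleNy ?lte_fin ?mulr_gt0// addeNy leNye.
have {y_neq0}{}y0 : 0 < y by rewrite lt_def y_neq0.
rewrite /= (elogR_gt0 y0).
have := ln_elbo_le (ltW g0) g1 r0 q0 e0 m0 y0 => /(ler_wpM2l (ltW G0)) H.
have {}H : c + G * ((1 - g) * ln r + ln e - ln m) + G * g * ln y <=
  c + G * (ln q - 1 + (1 - g) * (r / q - 1)) + e / m * (G * (1 - g) + G * g / q * y).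
  rewrite ?mulrA in H *; nra.
by rewrite -lee_fin in H.
Qed.

Section histories.
Context (d1 d2 d3 : measure_display) (S : measurableType d1)
  (A : measurableType d2) (Z : measurableType d3) (R : realType).
Implicit Types (h l : seq (S * Z * A)) (x : S * Z * A).

Lemma traj_cat l h t : (t < size h)%N -> traj (l ++ h) t = traj h t.
Proof. by move=> th; rewrite /traj rev_cat nth_cat size_rev th. Qed.

Lemma traj_head h : h != [::] -> traj h (size h).-1 = head point h.
Proof.
by case: h => // x h _; rewrite /traj nth_rev /= ?subnn// ltnS leqnn.
Qed.

Lemma traj_cons x h t : (t < size h)%N -> traj (x :: h) t = traj h t.
Proof. exact: (traj_cat [:: x]). Qed.

Lemma traj_last x h : traj (x :: h) (size h) = x.
Proof. by rewrite /traj rev_cons nth_rcons size_rev ltnn eqxx. Qed.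

Variables (muS : {measure set S -> \bar R}) (muZ : {measure set Z -> \bar R})
  (muA : {measure set A -> \bar R}) (p : S -> A -> S -> R) (pi : Z -> A -> R).
Local Notation ext := (ext muS muZ muA p pi).

Lemma ext_eq zd n F F' h :
  (forall l, size l = n -> F (l ++ h) = F' (l ++ h)) -> ext zd n F h = ext zd n F' h.
Proof.
elim: n h => [|n IH] h FF'; first exact: (FF' [::]).
cbn [ext]; rewrite (_ : (fun x => ext zd n F (x :: h)) = (fun x => ext zd n F' (x :: h)))//.
apply/funext => x; apply: IH => l sl.
by rewrite -cat_rcons; apply: FF'; rewrite size_rcons sl.
Qed.

Lemma ext_split zd n F h : ext zd n.+1 F h = ext zd n (ext zd 1 F) h.
Proof.
elim: n h => [|n IH] h; first by [].
cbn [ext].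
by rewrite (_ : (fun x => ext zd n.+1 F (x :: h)) = (fun x => ext zd n (ext zd 1 F) (x :: h)))//;
  apply/funext => x; exact: IH.
Qed.

Hypotheses (p_ge0 : forall s a s', (0 <= p s a s')%R) (pi_ge0 : forall z a, (0 <= pi z a)%R).

Lemma le_step_int zd (zd_ge0 : forall s z a s' z', (0 <= zd s z a s' z')%R)
    (F F' : S * Z * A -> \bar R) x : (forall y, (F y <= F' y)%E) ->
  (step_int muS muZ muA p pi zd F x <= step_int muS muZ muA p pi zd F' x)%E.
Proof.
case: x => [[s z] a] FF'.
apply: le_integral_density => // s'; apply: le_integral_density => // z'.
by apply: le_integral_density => // a'; exact: FF'.
Qed.

Lemma le_ext zd (zd_ge0 : forall s z a s' z', (0 <= zd s z a s' z')%R) n F F' h :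
  (forall l, size l = n -> (F (l ++ h) <= F' (l ++ h))%E) ->
  (ext zd n F h <= ext zd n F' h)%E.
Proof.
elim: n h => [|n IH] h FF'; first exact: (FF' [::]).
cbn [ext]; apply: le_step_int => // x; apply: IH => l sl.
by rewrite -cat_rcons; apply: FF'; rewrite size_rcons sl.
Qed.

End histories.

Section mdp.
Context (d1 d2 d3 : measure_display) (S : measurableType d1)
  (A : measurableType d2) (Z : measurableType d3) (R : realType)
  (muS : {sigma_finite_measure set S -> \bar R})
  (muZ : {sigma_finite_measure set Z -> \bar R})
  (muA : {sigma_finite_measure set A -> \bar R})
  (p : S -> A -> S -> R) (e : S -> Z -> R) (pi : Z -> A -> R)
  (mp : measurable_fun setT (fun x : S * A * S => p x.1.1 x.1.2 x.2))
  (me : measurable_fun setT (fun x : S * Z => e x.1 x.2))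
  (mpi : measurable_fun setT (fun x : Z * A => pi x.1 x.2))
  (p_ge0 : forall s a s', 0 <= p s a s')
  (e_ge0 : forall s z, 0 <= e s z)
  (pi_ge0 : forall z a, 0 <= pi z a)
  (p_1 : forall s a, (\int[muS]_s' (p s a s')%:E = 1)%E)
  (e_1 : forall s, (\int[muZ]_z (e s z)%:E = 1)%E)
  (pi_1 : forall z, (\int[muA]_a (pi z a)%:E = 1)%E).
Local Open Scope ereal_scope.
Implicit Types f : S -> A -> \bar R.

Definition jointly_measurable f := measurable_fun setT (fun x : S * A => f x.1 x.2).

Definition Epi f s' z' := \int[muA]_a' ((pi z' a')%:E * f s' a').
Definition Ee f s' := \int[muZ]_z' ((e s' z')%:E * Epi f s' z').
Definition Enext f s a := \int[muS]_s' ((p s a s')%:E * Ee f s').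

Let measurable_pi z : measurable_fun setT (pi z).
Proof. exact: (measurable_fun_pair2 (f := fun x : Z * A => pi x.1 x.2)). Qed.
Let measurable_e s : measurable_fun setT (e s).
Proof. exact: (measurable_fun_pair2 (f := fun x : S * Z => e x.1 x.2)). Qed.
Let measurable_p s a : measurable_fun setT (p s a).
Proof. exact: (measurable_fun_pair2 (f := fun x : S * A * S => p x.1.1 x.1.2 x.2) (s, a)). Qed.

Lemma le_Epi f g s' z' : (forall s a, f s a <= g s a) -> Epi f s' z' <= Epi g s' z'.
Proof. by move=> fg; apply: le_integral_density. Qed.

Lemma le_Ee f g s' : (forall s a, f s a <= g s a) -> Ee f s' <= Ee g s'.
Proof.
by move=> fg; apply: le_integral_density => // z'; exact: le_Epi.
Qed.

Lemma le_Enext f g s a : (forall s a, f s a <= g s a) -> Enext f s a <= Enext g s a.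
Proof.
by move=> fg; apply: le_integral_density => // s'; exact: le_Ee.
Qed.

Section nonnegative_function.
Variables (f : S -> A -> \bar R) (mf : jointly_measurable f) (f_ge0 : forall s a, 0 <= f s a).

Lemma Epi_ge0 s' z' : 0 <= Epi f s' z'.
Proof. by apply: integral_ge0 => a' _; rewrite mule_ge0 ?lee_fin. Qed.

Lemma Ee_ge0 s' : 0 <= Ee f s'.
Proof. by apply: integral_ge0 => z' _; rewrite mule_ge0 ?lee_fin ?Epi_ge0. Qed.

Lemma Enext_ge0 s a : 0 <= Enext f s a.
Proof. by apply: integral_ge0 => s' _; rewrite mule_ge0 ?lee_fin ?Ee_ge0. Qed.

Lemma measurable_Epi : measurable_fun setT (fun y : S * Z => Epi f y.1 y.2).
Proof.
apply: (measurable_fun_fubini_tonelli_F (m2 := muA)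
  (fun q : S * Z * A => (pi q.1.2 q.2)%:E * f q.1.1 q.2)).
- apply: emeasurable_funM.
    apply/measurable_EFinP.
    apply: (measurableT_comp (f := fun x : Z * A => pi x.1 x.2)
      (g := fun q : S * Z * A => (q.1.2, q.2))) => //.
    by apply: measurable_fun_pair => //; exact: measurableT_comp.
  apply: (measurableT_comp (f := fun x : S * A => f x.1 x.2)
    (g := fun q : S * Z * A => (q.1.1, q.2))) => //.
  by apply: measurable_fun_pair => //; exact: measurableT_comp.
- by move=> q; rewrite mule_ge0 ?lee_fin.
Qed.

Lemma measurable_Ee : measurable_fun setT (Ee f).
Proof.
apply: (measurable_fun_fubini_tonelli_F (m2 := muZ)
  (fun y : S * Z => (e y.1 y.2)%:E * Epi f y.1 y.2)).
- by apply: emeasurable_funM; [exact/measurable_EFinP|exact: measurable_Epi].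
- by move=> q; rewrite mule_ge0 ?lee_fin ?Epi_ge0.
Qed.

Lemma measurable_Enext : jointly_measurable (Enext f).
Proof.
apply: (measurable_fun_fubini_tonelli_F (m2 := muS)
  (fun q : S * A * S => (p q.1.1 q.1.2 q.2)%:E * Ee f q.2)).
- apply: emeasurable_funM; first exact/measurable_EFinP.
  exact: measurableT_comp measurable_Ee _.
- by move=> q; rewrite mule_ge0 ?lee_fin ?Ee_ge0.
Qed.

Lemma Epi_affine (a b : R) s' z' : (0 <= a)%R -> (0 <= b)%R ->
  Epi (fun s a' => a%:E + b%:E * f s a') s' z' = a%:E + b%:E * Epi f s' z'.
Proof.
move=> a0 b0; apply: integral_density_affine => //.
exact: (measurable_fun_pair2 (f := fun x : S * A => f x.1 x.2)) s' mf.
Qed.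

Lemma Ee_affine (a b : R) s' : (0 <= a)%R -> (0 <= b)%R ->
  Ee (fun s a' => a%:E + b%:E * f s a') s' = a%:E + b%:E * Ee f s'.
Proof.
move=> a0 b0; rewrite /Ee; under eq_integral => z' _ do rewrite Epi_affine//.
apply: integral_density_affine => //; last exact: Epi_ge0.
exact: (measurable_fun_pair2 (f := fun y : S * Z => Epi f y.1 y.2)) measurable_Epi.
Qed.

Lemma Enext_affine (a b : R) s a' : (0 <= a)%R -> (0 <= b)%R ->
  Enext (fun s a' => a%:E + b%:E * f s a') s a' = a%:E + b%:E * Enext f s a'.
Proof.
move=> a0 b0; rewrite /Enext; under eq_integral => s' _ do rewrite Ee_affine//.
by apply: integral_density_affine => //; [exact: measurable_Ee|exact: Ee_ge0].
Qed.

End nonnegative_function.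

Section increasing_limit.
Variables (F : nat -> S -> A -> \bar R) (mF : forall n, jointly_measurable (F n))
  (F_ge0 : forall n s a, 0 <= F n s a)
  (F_nd : forall s a, {homo (fun n => F n s a) : n k / (n <= k)%N >-> n <= k}).
Let Flim s a := limn (fun n => F n s a).

Lemma Epi_limn s' z' : Epi Flim s' z' = limn (fun n => Epi (F n) s' z').
Proof.
apply: integral_density_limn => // n.
exact: (measurable_fun_pair2 (f := fun x : S * A => F n x.1 x.2)) s' (mF n).
Qed.

Lemma Ee_limn s' : Ee Flim s' = limn (fun n => Ee (F n) s').
Proof.
rewrite /Ee; under eq_integral => z' _ do rewrite Epi_limn.
apply: integral_density_limn => //.
- by move=> n; exact: (measurable_fun_pair2 (f := fun y : S * Z => Epi (F n) y.1 y.2))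
    s' (measurable_Epi (mF n) (F_ge0 n)).
- by move=> n z'; exact: Epi_ge0.
- by move=> z' n k nk; apply: le_Epi => s a; exact: F_nd.
Qed.

Lemma Enext_limn s a : Enext Flim s a = limn (fun n => Enext (F n) s a).
Proof.
rewrite /Enext; under eq_integral => s' _ do rewrite Ee_limn.
apply: integral_density_limn => //.
- by move=> n; exact: measurable_Ee.
- by move=> n s'; exact: Ee_ge0.
- by move=> s' n k nk; apply: le_Ee => s0 a0; exact: F_nd.
Qed.

End increasing_limit.

Variables (r : S -> A -> R) (gamma : R)
  (mr : measurable_fun setT (fun x : S * A => r x.1 x.2))
  (r_ge0 : forall s a, (0 <= r s a)%R) (gamma_ge0 : (0 <= gamma)%R) (gamma_lt1 : (gamma < 1)%R).

Let gamma'_ge0 : (0 <= 1 - gamma)%R. Proof. by rewrite subr_ge0 ltW. Qed.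

Fixpoint value_iter (N : nat) : S -> A -> \bar R :=
  if N is N'.+1 then fun s a => ((1 - gamma) * r s a)%:E + gamma%:E * Enext (value_iter N') s a
  else fun s a => ((1 - gamma) * r s a)%:E.

Lemma value_iter_ge0 N s a : 0 <= value_iter N s a.
Proof.
elim: N s a => [|N IH] s a /=; first by rewrite lee_fin mulr_ge0.
by rewrite adde_ge0 ?mule_ge0 ?lee_fin ?mulr_ge0 ?Enext_ge0.
Qed.

Lemma measurable_value_iter N : jointly_measurable (value_iter N).
Proof.
have mr' : jointly_measurable (fun s a => ((1 - gamma) * r s a)%:E).
  by apply/measurable_EFinP; exact: measurable_funM.
elim: N => [//|N IH]; apply: emeasurable_funD => //.
apply: measurable_funeM; apply: measurable_Enext => //; exact: value_iter_ge0.
Qed.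

Lemma value_iterS N s a :
  value_iter N.+1 s a = ((1 - gamma) * r s a)%:E + gamma%:E * Enext (value_iter N) s a.
Proof. by []. Qed.

Lemma value_iter_nd s a : {homo (fun N => value_iter N s a) : n k / (n <= k)%N >-> n <= k}.
Proof.
apply/nondecreasing_seqP => N; elim: N s a => [|N IH] s a.
  by rewrite value_iterS leeDl// mule_ge0 ?lee_fin ?Enext_ge0//; exact: value_iter_ge0.
rewrite [leRHS]value_iterS [leLHS]value_iterS; apply: leeD2l.
by apply: lee_wpmul2l; [rewrite lee_fin|exact: le_Enext].
Qed.

Definition disc_return (n0 N : nat) (h : seq (S * Z * A)) : R :=
  \sum_(t < N.+1) gamma ^+ t * r (st h (n0 + t)) (at_ h (n0 + t)).

Lemma disc_returnS n0 N h s z a : traj h n0 = (s, z, a) ->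
  disc_return n0 N.+1 h = (r s a + gamma * disc_return n0.+1 N h)%R.
Proof.
move=> hn0; rewrite /disc_return big_ord_recl addn0 expr0 mul1r /st /at_ hn0 mulr_sumr.
by congr (_ + _)%R; apply: eq_bigr => t _; rewrite lift0 addnS -addSn exprS mulrA.
Qed.

(* Generalized to an affine function of the return, so that the reward of the
   current step can be absorbed into the constant [c]. *)
Lemma ext_true_disc_return N (c b : R) h : h != [::] -> (0 <= c)%R -> (0 <= b)%R ->
  ext muS muZ muA p pi (zd_true e) N
    (fun h' => (c + b * ((1 - gamma) * disc_return (size h).-1 N h'))%:E) h
  = c%:E + b%:E * value_iter N (head point h).1.1 (head point h).2.
Proof.
elim: N c b h => [|N IH] c b h hn c0 b0.
  by rewrite /= /disc_return big_ord1 expr0 mul1r addn0 /st /at_ traj_head.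
case hh: (head point h) => [[s z] a].
have hsa : traj h (size h).-1 = (s, z, a) by rewrite traj_head// hh.
cbn [ext]; rewrite hh.
set c' := (c + b * ((1 - gamma) * r s a))%R; set b' := (b * gamma)%R.
transitivity (step_int muS muZ muA p pi (zd_true e)
  (fun x => c'%:E + b'%:E * value_iter N x.1.1 x.2) (s, z, a)).
  apply: (f_equal (fun G => step_int muS muZ muA p pi (zd_true e) G (s, z, a))).
  apply/funext => x; rewrite -(IH c' b' (x :: h)) ?addr_ge0 ?mulr_ge0//.
  apply: ext_eq => l _; congr EFin.
  rewrite (disc_returnS _ (s := s) (z := z) (a := a)) /=; last first.
    by rewrite -cat_rcons traj_cat// prednK ?lt0n ?size_eq0// leqnn.
  rewrite prednK ?lt0n ?size_eq0//; rewrite /c' /b'; ring.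
change (Enext (fun s' a' => c'%:E + b'%:E * value_iter N s' a') s a =
  c%:E + b%:E * value_iter N.+1 s a).
rewrite Enext_affine ?addr_ge0 ?mulr_ge0//; last exact: value_iter_ge0.
- by rewrite value_iterS [in RHS]muleDr// [in RHS]addeA muleA -!EFinM -EFinD.
- exact: measurable_value_iter.
Qed.

Local Notation Q := (Qfun muS muZ muA p e pi r gamma).

Lemma Qtrunc_value_iter N s a : Qtrunc muS muZ muA p e pi r gamma N s a = value_iter N s a.
Proof.
have := @ext_true_disc_return N 0 1 [:: (s, point, a)] isT (lexx 0%R) ler01.
by rewrite add0e mul1e => <-; rewrite /Qtrunc; congr ext; apply/funext => h; rewrite add0r mul1r.
Qed.

Lemma Q_limn s a : Q s a = limn (fun N => value_iter N s a).
Proof. by rewrite /Qfun; congr (lim (_ @ \oo)); apply/funext => N; exact: Qtrunc_value_iter. Qed.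

Lemma value_iter_le_Q N s a : value_iter N s a <= Q s a.
Proof.
rewrite Q_limn (cvg_lim _ (ereal_nondecreasing_cvgn (value_iter_nd s a)))//.
by apply: ereal_sup_ubound; exists N.
Qed.

Lemma Q_ge0 s a : 0 <= Q s a.
Proof. exact: le_trans (value_iter_ge0 0 s a) (value_iter_le_Q 0 s a). Qed.

Lemma measurable_Q : jointly_measurable Q.
Proof.
apply: (emeasurable_fun_cvg (fun N (x : S * A) => value_iter N x.1 x.2)).
  by move=> N; exact: measurable_value_iter.
move=> x _; rewrite Q_limn.
exact/ereal_nondecreasing_is_cvgn/value_iter_nd.
Qed.

Lemma Q_bellman_le s a : ((1 - gamma) * r s a)%:E + gamma%:E * Enext Q s a <= Q s a.
Proof.
have Enext_nd : {homo (fun N => Enext (value_iter N) s a) : n k / (n <= k)%N >-> n <= k}.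
  by move=> n k nk; apply: le_Enext => s' a'; exact: value_iter_nd.
have EnextQ : Enext Q s a = limn (fun N => Enext (value_iter N) s a).
  have -> : Q = fun s a => limn (fun N => value_iter N s a).
    by apply/funext => s'; apply/funext => a'; exact: Q_limn.
  exact: (Enext_limn measurable_value_iter value_iter_ge0 value_iter_nd).
rewrite EnextQ -limeMl//; last exact: ereal_nondecreasing_is_cvgn.
have -> : ((1 - gamma) * r s a)%:E = limn (fun=> ((1 - gamma) * r s a)%:E).
  by rewrite lim_cst.
rewrite -limeD.
- apply: lime_le.
    apply: ereal_nondecreasing_is_cvgn => n k nk.
    by apply: leeD2l; apply: lee_wpmul2l; [rewrite lee_fin|exact: Enext_nd].
  by apply: nearW => N; rewrite -value_iterS; exact: value_iter_le_Q.
- exact: is_cvg_cst.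
- apply: ereal_nondecreasing_is_cvgn => n k nk.
  by apply: lee_wpmul2l; [rewrite lee_fin|exact: Enext_nd].
- by rewrite lim_cst// fin_num_adde_defr.
Qed.

Variables (m : Z -> A -> Z -> R)
  (mm : measurable_fun setT (fun x : Z * A * Z => m x.1.1 x.1.2 x.2))
  (m_ge0 : forall z a z', (0 <= m z a z')%R)
  (m_1 : forall z a, \int[muZ]_z' (m z a z')%:E = 1).

Let measurable_m z a : measurable_fun setT (m z a).
Proof. exact: (measurable_fun_pair2 (f := fun x : Z * A * Z => m x.1.1 x.1.2 x.2) (z, a)). Qed.

Local Notation model_step := (step_int muS muZ muA p pi (zd_model m)).

Lemma model_step_cst (k : \bar R) x : model_step (fun=> k) x = k.
Proof.
case: x => [[s z] a].
have Epi_cst z' : \int[muA]_a' ((pi z' a')%:E * k) = k.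
  exact: (integral_density_cst (measurable_pi z') (pi_ge0 z') (pi_1 z') k).
have Em_cst : \int[muZ]_z' ((m z a z')%:E * \int[muA]_a' ((pi z' a')%:E * k)) = k.
  under eq_integral => z' _ do rewrite Epi_cst.
  exact: (integral_density_cst (measurable_m z a) (m_ge0 z a) (m_1 z a) k).
rewrite /step_int /=; under eq_integral => s' _ do rewrite Em_cst.
exact: (integral_density_cst (measurable_p s a) (p_ge0 s a) (p_1 s a) k).
Qed.

(* Where m vanishes the model integrand has weight 0, so F needs no bound there. *)
Lemma model_step_le_Enext (C : R) (Y : S -> A -> \bar R) s z a F :
  jointly_measurable Y -> (forall s a, 0 <= Y s a) ->
  (forall s' z' a', (0 < m z a z')%R ->
     F (s', z', a') <= C%:E + (e s' z' / m z a z')%:E * Y s' a') ->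
  model_step F (s, z, a) <= C%:E + Enext Y s a.
Proof.
move=> mY Y_ge0 FY.
apply: le_trans _ (integral_density_cstD_le (measurable_p s a) (p_ge0 s a) (p_1 s a) C
  (measurable_Ee mY Y_ge0) (Ee_ge0 Y_ge0)).
apply: le_integral_density => // s'.
have mG : measurable_fun setT (fun z' => (e s' z')%:E * Epi Y s' z').
  apply: emeasurable_funM; first exact/measurable_EFinP.
  exact: (measurable_fun_pair2 (f := fun y : S * Z => Epi Y y.1 y.2)) s' (measurable_Epi mY Y_ge0).
have G_ge0 z' : 0 <= (e s' z')%:E * Epi Y s' z' by rewrite mule_ge0 ?lee_fin ?Epi_ge0.
apply: le_trans _ (integral_cst_densityD_le (measurable_m z a) (m_ge0 z a) (m_1 z a) C mG G_ge0).
apply: le_integral_pointwise => z'; rewrite /zd_model.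
have [m0|m_gt0] := eqVneq (m z a z') 0%R.
  by rewrite m0 !mul0e add0e mule_ge0 ?lee_fin ?Epi_ge0.
have {m_gt0}m_gt0 : (0 < m z a z')%R by rewrite lt_def m_gt0 m_ge0.
have em_ge0 : (0 <= e s' z' / m z a z')%R := divr_ge0 (e_ge0 s' z') (ltW m_gt0).
have EpiF : \int[muA]_a' ((pi z' a')%:E * F (s', z', a')) <=
    C%:E + (e s' z' / m z a z')%:E * Epi Y s' z'.
  apply: (@le_trans _ _ (\int[muA]_a' ((pi z' a')%:E *
      (C%:E + (e s' z' / m z a z')%:E * Y s' a')))).
    by apply: le_integral_density => // a'; exact: FY.
  have mYs' : measurable_fun setT (Y s').
    exact: (measurable_fun_pair2 (f := fun x : S * A => Y x.1 x.2)) s' mY.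
  apply: le_trans (integral_density_cstD_le (measurable_pi z') (pi_ge0 z') (pi_1 z') _
    (measurable_funeM _ mYs') _) _.
    by move=> a'; rewrite mule_ge0 ?lee_fin.
  rewrite leeD2l//; under eq_integral do rewrite muleCA.
  rewrite ge0_integralZl ?lee_fin//; first by apply: emeasurable_funM => //; exact/measurable_EFinP.
  by move=> a' _; rewrite mule_ge0 ?lee_fin.
apply: le_trans (lee_wpmul2l _ EpiF) _; first by rewrite lee_fin.
by rewrite muleDr// muleA -[X in X * Epi _ _ _]EFinM mulrCA mulfV ?gt_eqF// mulr1.
Qed.

Lemma model_step_elbo_le_fin (c G q : R) s z a F :
  (0 < G)%R -> (0 < r s a)%R -> Q s a = q%:E ->
  (forall s' z' a', F (s', z', a') =
    c%:E + G%:E * ((1 - gamma)%:E * elogR (r s a) + elogR (e s' z') - elogR (m z a z'))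
    + (G * gamma)%:E * elog (Q s' a')) ->
  model_step F (s, z, a) <= (c + G * ln q)%:E.
Proof.
move=> G_gt0 r_gt0 Qq hF.
have G_ge0 := ltW G_gt0.
have q_gt0 : (0 < q)%R.
  rewrite -lte_fin -Qq; apply: lt_le_trans (value_iter_le_Q 0 s a).
  by rewrite lte_fin mulr_gt0 ?subr_gt0.
pose C := (c + G * (ln q - 1 + (1 - gamma) * (r s a / q - 1)))%R.
pose a0 := (G * (1 - gamma))%R; pose b0 := (G * gamma / q)%R.
have a0_ge0 : (0 <= a0)%R by rewrite mulr_ge0.
have b0_ge0 : (0 <= b0)%R := divr_ge0 (mulr_ge0 G_ge0 gamma_ge0) (ltW q_gt0).
pose Y s' a' := a0%:E + b0%:E * Q s' a'.
have mY : jointly_measurable Y.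
  by apply: emeasurable_funD => //; apply: measurable_funeM; exact: measurable_Q.
have Y_ge0 s' a' : 0 <= Y s' a' by rewrite adde_ge0 ?mule_ge0 ?lee_fin ?Q_ge0.
apply: (@le_trans _ _ (C%:E + Enext Y s a)).
  apply: model_step_le_Enext => // s' z' a' m_gt0; rewrite hF.
  exact: elbo_integrand_le G_gt0 gamma_ge0 gamma_lt1 r_gt0 q_gt0 (e_ge0 s' z') m_gt0 (Q_ge0 s' a').
rewrite (Enext_affine measurable_Q Q_ge0)//.
have -> : b0%:E * Enext Q s a = (G / q)%:E * (gamma%:E * Enext Q s a).
  by rewrite muleA -EFinM /b0 mulrAC.
have bellman : (G / q)%:E * (gamma%:E * Enext Q s a) <= (G / q)%:E * (q - (1 - gamma) * r s a)%:E.
  apply: lee_wpmul2l; first by rewrite lee_fin (divr_ge0 G_ge0 (ltW q_gt0)).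
  by rewrite EFinB leeBrDl// -Qq; exact: Q_bellman_le.
apply: le_trans (leeD2l _ (leeD2l _ bellman)) _.
rewrite -EFinM -!EFinD lee_fin.
suff -> : (C + (a0 + G / q * (q - (1 - gamma) * r s a)) = c + G * ln q)%R by [].
by rewrite /C /a0; field; rewrite gt_eqF.
Qed.

Lemma model_step_elbo_le (c : \bar R) (G : R) s z a F : (0 <= G)%R ->
  (forall s' z' a', F (s', z', a') =
    c + G%:E * ((1 - gamma)%:E * elogR (r s a) + elogR (e s' z') - elogR (m z a z'))
    + (G * gamma)%:E * elog (Q s' a')) ->
  model_step F (s, z, a) <= c + G%:E * elog (Q s a).
Proof.
move=> G_ge0 hF.
have F_Ny : (forall y, F y = -oo) -> model_step F (s, z, a) <= c + G%:E * elog (Q s a).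
  by move=> FNy; rewrite (_ : F = fun=> -oo) ?model_step_cst ?leNye//; exact/funext.
have [G0|G_neq0] := eqVneq G 0%R.
  rewrite (_ : F = fun=> c) ?model_step_cst ?G0 ?mul0e ?adde0//.
  by apply/funext => -[[s' z'] a']; rewrite hF G0 mul0r !mul0e !adde0.
have {G_neq0}G_gt0 : (0 < G)%R by rewrite lt_def G_neq0.
have [r0|r_neq0] := eqVneq (r s a) 0%R.
  apply: F_Ny => -[[s' z'] a']; rewrite hF r0 elogR0 gt0_muleNy ?lte_fin ?subr_gt0//.
  by rewrite !addNye gt0_muleNy ?lte_fin// addeNy addNye.
have {r_neq0}r_gt0 : (0 < r s a)%R by rewrite lt_def r_neq0 r_ge0.
have Q_gt0 : 0 < Q s a.
  apply: lt_le_trans (value_iter_le_Q 0 s a).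
  by rewrite lte_fin mulr_gt0 ?subr_gt0.
case: c hF F_Ny => [c| |] hF F_Ny.
- case HQ: (Q s a) Q_gt0 => [q| |] // q_gt0.
    rewrite /= elogR_gt0 -?lte_fin// -EFinM -EFinD.
    exact: model_step_elbo_le_fin G_gt0 r_gt0 HQ hF.
  by rewrite /= gt0_muley ?lte_fin// addey ?leey.
- rewrite addye ?leey//.
  by case: (Q s a) Q_gt0 => [q| |] //= q_gt0; rewrite ?elogR_gt0 -?lte_fin// gt0_muley ?lte_fin.
- by apply: F_Ny => -[[s' z'] a']; rewrite hF.
Qed.

Local Notation L k := (Lintegrand muS muZ muA p e m pi r gamma k).

Lemma ext1_Lintegrand_le K h : size h = K.+1 ->
  ext muS muZ muA p pi (zd_model m) 1 (L K.+1) h <= L K h.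
Proof.
move=> hK; have h_neq0 : h != [::] by rewrite -size_eq0 hK.
case hh: (head point h) => [[s z] a].
have hKsza : traj h K = (s, z, a) by rewrite -hh -traj_head// hK.
cbn [ext]; rewrite hh [L K h]/Lintegrand /st /at_ hKsza.
apply: model_step_elbo_le; first exact: exprn_ge0.
move=> s' z' a'.
have tK : traj ((s', z', a') :: h) K = (s, z, a) by rewrite traj_cons ?hK.
have tK1 : traj ((s', z', a') :: h) K.+1 = (s', z', a') by rewrite -hK traj_last.
rewrite /Lintegrand big_ord_recr exprSr.
congr (_ + _); first apply: f_equal2.
- apply: eq_bigr => t _.
  have t_lt : (t < size h)%N by rewrite hK ltnS; exact: ltnW.
  have t1_lt : (t.+1 < size h)%N by rewrite hK ltnS.
  by rewrite /st /zt /at_ !traj_cons.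
- by rewrite /st /zt /at_ tK tK1.
- by rewrite /st /at_ tK1.
Qed.

End mdp.

Theorem mainTheorem3
  (d1 d2 d3 : measure_display) (S : measurableType d1)
  (A : measurableType d2) (Z : measurableType d3) (R : realType)
  (muS : {sigma_finite_measure set S -> \bar R})
  (muZ : {sigma_finite_measure set Z -> \bar R})
  (muA : {sigma_finite_measure set A -> \bar R})
  (p0 : S -> R) (p : S -> A -> S -> R) (e : S -> Z -> R)
  (m : Z -> A -> Z -> R) (pi : Z -> A -> R) (r : S -> A -> R) (gamma : R)
  (* discount *)
  (hg0 : 0 <= gamma) (hg1 : gamma < 1)
  (* nonnegative reward *)
  (hr : forall s a, 0 <= r s a)
  (* measurability *)
  (mp0 : measurable_fun setT p0)
  (mp : measurable_fun setT (fun x : S * A * S => p x.1.1 x.1.2 x.2))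
  (me : measurable_fun setT (fun x : S * Z => e x.1 x.2))
  (mm : measurable_fun setT (fun x : Z * A * Z => m x.1.1 x.1.2 x.2))
  (mpi : measurable_fun setT (fun x : Z * A => pi x.1 x.2))
  (mr : measurable_fun setT (fun x : S * A => r x.1 x.2))
  (* (conditional) probability densities *)
  (p0_ge0 : forall s, 0 <= p0 s)
  (p_ge0 : forall s a s', 0 <= p s a s')
  (e_ge0 : forall s z, 0 <= e s z)
  (m_ge0 : forall z a z', 0 <= m z a z')
  (pi_ge0 : forall z a, 0 <= pi z a)
  (p0_1 : (\int[muS]_s (p0 s)%:E = 1)%E)
  (p_1 : forall s a, (\int[muS]_s' (p s a s')%:E = 1)%E)
  (e_1 : forall s, (\int[muZ]_z (e s z)%:E = 1)%E)
  (m_1 : forall z a, (\int[muZ]_z' (m z a z')%:E = 1)%E)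
  (pi_1 : forall z, (\int[muA]_a (pi z a)%:E = 1)%E)
  (K : nat)
  (* the expectations L^K and L^{K+1} are well defined *)
  (intK : Lintegrable muS muZ muA p0 p e m pi r gamma K)
  (intK1 : Lintegrable muS muZ muA p0 p e m pi r gamma K.+1) :
  (Lobj muS muZ muA p0 p e m pi r gamma K.+1
     <= Lobj muS muZ muA p0 p e m pi r gamma K)%E.
Proof.
rewrite /Lobj /Eq; apply: (le_integral_density _ p0_ge0) => s0.
apply: (le_integral_density _ (e_ge0 s0)) => z0.
apply: (le_integral_density _ (pi_ge0 z0)) => a0.
rewrite ext_split; apply: (le_ext _ _ _ p_ge0 pi_ge0 (fun _ z a _ z' => m_ge0 z a z')) => l sl.
by apply: ext1_Lintegrand_le; rewrite ?size_cat ?sl ?addn1.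
Qed.
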